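(* Let $c,d\in\mathbb{R}^n$ be distinct nonzero vectors with $c^Td\le0$. Set $e=c-d$, $\beta=c^Te$, and $$d_+=d-(c^Td)\Big(\frac{e}{\beta}-\frac{c}{\|c\|\sqrt{\beta}}\Big),\qquad c_+=c-(c^Tc)\Big(\frac{e}{\beta}-\frac{c}{\|c\|\sqrt{\beta}}\Big).$$ Then $\gamma[c_+,d_+]\ge\gamma[c,d]+(\gamma[c,d])^3$.
   Context: For distinct vectors $c,d\in\mathbb{R}^n$, $\gamma[c,d]=\frac{\sqrt{\|c\|^2\|d\|^2-(c^Td)^2}}{\|c-d\|^2}$ (symmetric in $c,d$). Note $\beta=\|c\|^2-c^Td>0$ under the hypotheses. *)

From HB Require Import structures.
From mathcomp Require Import all_boot all_order all_algebra.
Set Implicit Arguments. Unset Strict Implicit. Unset Printing Implicit Defensive.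
Import Order.TTheory GRing.Theory Num.Theory.
Local Open Scope ring_scope.

Definition dotv (R : rcfType) (n : nat) (u v : 'rV[R]_n) : R := (u *m v^T) 0 0.

Definition normv (R : rcfType) (n : nat) (u : 'rV[R]_n) : R := Num.sqrt (dotv u u).

Definition gammav (R : rcfType) (n : nat) (c d : 'rV[R]_n) : R :=
  Num.sqrt (normv c ^+ 2 * normv d ^+ 2 - dotv c d ^+ 2) / normv (c - d) ^+ 2.

From HB Require Import structures.
From mathcomp Require Import all_boot all_order all_algebra.
From mathcomp Require Import ring lra.
Set Implicit Arguments. Unset Strict Implicit. Unset Printing Implicit Defensive.
Import Order.TTheory GRing.Theory Num.Theory.
Local Open Scope ring_scope.

(* Put s = |c|, t = sqrt beta and E = |c - d|^2; then c^T d = s^2 - t^2, so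
   s <= t, and the Gram determinant G = |c|^2 |d|^2 - (c^T d)^2 equals
   s^2 E - t^4.  The update is built so that c+ - d+ = (t/s) c and
   d+ = (s^2/t^2) d + (multiple of c).  The Gram determinant is invariant under
   shears and quadratic under scalings, hence |c+ - d+|^2 = t^2 and
   G+ = (s/t)^2 G: gamma = sqrt G / E grows to gamma+ = s sqrt G / t^3.  The
   inequality reduces to t^3 (E^2 + G) <= s E^3, i.e. to
   (E^2 - s t^3)(s E - t^3) + t^6 (t - s) >= 0, where each factor is
   nonnegative because s <= t and t^4 <= s^2 E. *)

Lemma cubic_gain (R : realFieldType) (s t E : R) :
  0 < s -> s <= t -> t ^+ 4 <= s ^+ 2 * E ->
  t ^+ 3 * (E ^+ 2 + (s ^+ 2 * E - t ^+ 4)) <= s * E ^+ 3.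
Proof.
move=> s_gt0 s_le_t tE.
have t_gt0 : 0 < t by apply: lt_le_trans s_le_t.
have st3_le_t4 : s * t ^+ 3 <= t ^+ 4.
  by rewrite [t ^+ 4]exprS ler_pM2r ?exprn_gt0.
have t3_le_sE : t ^+ 3 <= s * E.
  by rewrite -(ler_pM2l s_gt0) (le_trans st3_le_t4) // mulrA -expr2.
have t2_le_E : t ^+ 2 <= E.
  rewrite -(ler_pM2l s_gt0) (le_trans _ t3_le_sE) // [t ^+ 3]exprSr mulrC.
  by rewrite ler_pM2l ?exprn_gt0.
have E_ge0 : 0 <= E := le_trans (exprn_ge0 2 (ltW t_gt0)) t2_le_E.
have st3_le_E2 : s * t ^+ 3 <= E ^+ 2.
  apply: le_trans st3_le_t4 _; rewrite (exprM t 2 2).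
  by rewrite ler_pXn2r // nnegrE exprn_ge0 // ltW.
rewrite -subr_ge0 (_ : s * E ^+ 3 - _ =
  (E ^+ 2 - s * t ^+ 3) * (s * E - t ^+ 3) + t ^+ 6 * (t - s)); last by ring.
by rewrite addr_ge0 ?mulr_ge0 ?exprn_ge0 ?subr_ge0 // ltW.
Qed.

Lemma gamma_gain (R : rcfType) (s t E G : R) :
  0 < s -> s <= t -> G = s ^+ 2 * E - t ^+ 4 ->
  Num.sqrt G / E + (Num.sqrt G / E) ^+ 3 <= Num.sqrt ((s / t) ^+ 2 * G) / t ^+ 2.
Proof.
move=> s_gt0 s_le_t G_def.
have t_gt0 : 0 < t by apply: lt_le_trans s_le_t.
(* For G < 0 both square roots are 0 and the inequality is trivial. *)
have [G_lt0 | G_ge0] := ltP G 0.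
  rewrite !ltr0_sqrtr ?pmulr_rlt0 ?exprn_gt0 ?divr_gt0 //.
  by rewrite !mul0r expr0n addr0.
have tE : t ^+ 4 <= s ^+ 2 * E by rewrite -subr_ge0 -G_def.
have E_gt0 : 0 < E.
  by rewrite -(pmulr_rgt0 _ (exprn_gt0 2 s_gt0)) (lt_le_trans _ tE) ?exprn_gt0.
rewrite sqrtrM ?sqr_ge0 // sqrtr_sqr ger0_norm; last by rewrite divr_ge0 ?ltW.
have := sqr_sqrtr G_ge0; set g := Num.sqrt G => g2.
rewrite -subr_ge0 (_ : _ - _ =
  g * (s * E ^+ 3 - t ^+ 3 * (E ^+ 2 + g ^+ 2)) / (t ^+ 3 * E ^+ 3)); last first.
  by field; rewrite !gt_eqF.
rewrite divr_ge0 ?mulr_ge0 ?exprn_ge0 ?sqrtr_ge0 ?subr_ge0 ?(ltW t_gt0) ?(ltW E_gt0) //.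
by rewrite g2 G_def cubic_gain.
Qed.

Section Dot.
Variables (R : rcfType) (n : nat).
Implicit Types (u v z : 'rV[R]_n) (k : R).

Lemma dotvC u v : dotv u v = dotv v u.
Proof. by rewrite /dotv -[in RHS](trmxK (v *m u^T)) trmx_mul trmxK [RHS]mxE. Qed.

Lemma dotvDl u v z : dotv (u + v) z = dotv u z + dotv v z.
Proof. by rewrite /dotv mulmxDl mxE. Qed.

Lemma dotvNl u z : dotv (- u) z = - dotv u z.
Proof. by rewrite /dotv mulNmx mxE. Qed.

Lemma dotvZl k u z : dotv (k *: u) z = k * dotv u z.
Proof. by rewrite /dotv -scalemxAl mxE. Qed.

Lemma dotvDr u v z : dotv z (u + v) = dotv z u + dotv z v.
Proof. by rewrite dotvC dotvDl !(dotvC z). Qed.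

Lemma dotvNr u z : dotv z (- u) = - dotv z u.
Proof. by rewrite dotvC dotvNl dotvC. Qed.

Lemma dotvZr k u z : dotv z (k *: u) = k * dotv z u.
Proof. by rewrite dotvC dotvZl dotvC. Qed.

Definition dotvE := (dotvDl, dotvDr, dotvNl, dotvNr, dotvZl, dotvZr).

Lemma dotv_sum u v : dotv u v = \sum_j u 0 j * v 0 j.
Proof. by rewrite /dotv !mxE; apply: eq_bigr => j _; rewrite !mxE. Qed.

Lemma dotv_ge0 u : 0 <= dotv u u.
Proof. by rewrite dotv_sum; apply: sumr_ge0 => j _; rewrite -expr2 sqr_ge0. Qed.

Lemma dotv_gt0 u : u != 0 -> 0 < dotv u u.
Proof.
move=> u_neq0; rewrite lt_def dotv_ge0 andbT; apply: contra u_neq0.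
rewrite dotv_sum => /eqP /psumr_eq0P u0; apply/eqP/rowP => j; rewrite mxE.
by apply/eqP; rewrite -sqrf_eq0 expr2 u0 // => i _; rewrite -expr2 sqr_ge0.
Qed.

Definition gramv u v := dotv u u * dotv v v - dotv u v ^+ 2.

Lemma gramvC u v : gramv u v = gramv v u.
Proof. by rewrite /gramv dotvC mulrC. Qed.

Lemma gramvZl k u v : gramv (k *: u) v = k ^+ 2 * gramv u v.
Proof. by rewrite /gramv !dotvE; ring. Qed.

Lemma gramvZr k u v : gramv u (k *: v) = k ^+ 2 * gramv u v.
Proof. by rewrite gramvC gramvZl gramvC. Qed.

Lemma gramvDZr k u v : gramv u (v + k *: u) = gramv u v.
Proof. by rewrite /gramv !dotvE (dotvC v u); ring. Qed.

Lemma gramvBl u v : gramv (u - v) v = gramv u v.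
Proof. by rewrite /gramv !dotvE (dotvC v u); ring. Qed.

Lemma gramvBr u v : gramv u (u - v) = gramv u v.
Proof. by rewrite /gramv !dotvE (dotvC v u); ring. Qed.

Lemma gammavE u v : gammav u v = Num.sqrt (gramv u v) / dotv (u - v) (u - v).
Proof. by rewrite /gammav /normv !sqr_sqrtr ?dotv_ge0. Qed.
End Dot.

Section Update.
Variables (R : rcfType) (n : nat) (c d : 'rV[R]_n) (s t : R).
Hypotheses (s_neq0 : s != 0) (t_neq0 : t != 0).
Hypotheses (s2 : s ^+ 2 = dotv c c) (t2 : t ^+ 2 = dotv c (c - d)).

Local Notation w := ((dotv c (c - d))^-1 *: (c - d) - (s * t)^-1 *: c).
Local Notation cplus := (c - dotv c c *: w).
Local Notation dplus := (d - dotv c d *: w).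

Lemma dotv_cdE : dotv c d = s ^+ 2 - t ^+ 2.
Proof. by rewrite s2 t2 !dotvE; ring. Qed.

Lemma update_sub : cplus - dplus = (t / s) *: c.
Proof.
rewrite -t2 -s2 dotv_cdE; apply/rowP => j; rewrite !mxE.
by field; apply/andP.
Qed.

Lemma update_decomp :
  dplus = (s ^+ 2 / t ^+ 2) *: d + (dotv c d * ((s * t)^-1 - (t ^+ 2)^-1)) *: c.
Proof.
rewrite -t2 dotv_cdE; apply/rowP => j; rewrite !mxE.
by field; apply/andP.
Qed.

Lemma update_dist : dotv (cplus - dplus) (cplus - dplus) = t ^+ 2.
Proof. by rewrite update_sub dotvZl dotvZr -s2; field. Qed.

Lemma update_gram : gramv cplus dplus = (s / t) ^+ 2 * gramv c d.
Proof.
rewrite -gramvBl update_sub gramvZl update_decomp gramvDZr gramvZr.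
by rewrite mulrA; congr (_ * _); field; apply/andP.
Qed.
End Update.

Theorem mainTheorem9 (R : rcfType) (n : nat) (c d : 'rV[R]_n) :
  c != 0 -> d != 0 -> c != d -> dotv c d <= 0 ->
  let e := c - d in
  let beta := dotv c e in
  let w := beta^-1 *: e - (normv c * Num.sqrt beta)^-1 *: c in
  let dplus := d - dotv c d *: w in
  let cplus := c - dotv c c *: w in
  gammav cplus dplus >= gammav c d + gammav c d ^+ 3.
Proof.
move=> c_neq0 _ _ cd_le0; cbv zeta.
have cc_gt0 := dotv_gt0 c_neq0.
have beta_ge_cc : dotv c c <= dotv c (c - d) by rewrite !dotvE; lra.
have beta_gt0 := lt_le_trans cc_gt0 beta_ge_cc.
have s_gt0 : 0 < normv c by rewrite sqrtr_gt0.
have t_gt0 : 0 < Num.sqrt (dotv c (c - d)) by rewrite sqrtr_gt0.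
have s2 : normv c ^+ 2 = dotv c c by rewrite sqr_sqrtr ?ltW.
have t2 : Num.sqrt (dotv c (c - d)) ^+ 2 = dotv c (c - d) by rewrite sqr_sqrtr ?ltW.
rewrite !gammavE update_dist ?update_gram ?gt_eqF //.
apply: gamma_gain => //; first by rewrite /normv ler_sqrt // ltW.
by rewrite -(gramvBr c d) /gramv s2 (exprM _ 2 2) t2.
Qed.
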